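(* Let $0\to(M,\alpha_M)\to(K,\alpha_K)\xrightarrow{\pi}(L,\alpha_L)\to0$ be a central extension of Hom-Leibniz $n$-algebras. If $(K,\alpha_K)$ is perfect and every central extension of $(K,\alpha_K)$ splits, then $\pi$ is a universal central extension.
   Context: Fix a field $\mathbb K$ and $n\ge2$. A (multiplicative) Hom-Leibniz $n$-algebra is a $\mathbb K$-vector space $L$ with an $n$-linear bracket and a linear map $\alpha_L$ preserving the bracket, satisfying $[[x_1,\dots,x_n],\alpha_L(y_1),\dots,\alpha_L(y_{n-1})]=\sum_{i=1}^n[\alpha_L(x_1),\dots,[x_i,y_1,\dots,y_{n-1}],\dots,\alpha_L(x_n)]$. Homomorphisms preserve brackets and commute with twisting maps. Perfect: $K=[K,\dots,K]$. Center $Z(K)$: elements $x$ such that every bracket with $x$ in some position equals $0$. An extension of $L$ is a surjective homomorphism $\pi:K\to L$ with kernel $M$; central if $M\subseteq Z(K)$. An extension $\rho:F\to K$ splits if there is a homomorphism $\sigma:K\to F$ with $\rho\circ\sigma=\mathrm{id}_K$. A central extension $\pi:K\to L$ is universal central if for every central extension $\pi':K'\to L$ there is a unique homomorphism $h:K\to K'$ with $\pi'\circ h=\pi$. *)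

(* Hom-Leibniz n-algebras over a field F, with n = m.+1. *)
From HB Require Import structures.
From mathcomp Require Import all_boot all_order all_algebra.
Set Implicit Arguments. Unset Strict Implicit. Unset Printing Implicit Defensive.
Import GRing.Theory.
Local Open Scope ring_scope.

Definition tsubst (T U : Type) (n : nat) (f : T -> U) (t : n.-tuple T) (i : 'I_n) (v : U)
  : n.-tuple U := [tuple (if j == i then v else f (tnth t j)) | j < n].

Definition linmap (F : fieldType) (V W : lmodType F) (f : V -> W) : Prop :=
  forall (a : F) (x y : V), f (a *: x + y) = a *: f x + f y.

Structure hlalg (F : fieldType) (m : nat) := HLAlg {
  hl_sort :> lmodType F;
  hl_br : m.+1.-tuple hl_sort -> hl_sort;
  hl_alpha : hl_sort -> hl_sort;
  hl_br_multilin : forall (t : m.+1.-tuple hl_sort) (i : 'I_m.+1),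
     linmap (fun x : hl_sort => hl_br (tsubst id t i x));
  hl_alpha_lin : linmap hl_alpha;
  hl_alpha_mult : forall t : m.+1.-tuple hl_sort,
     hl_alpha (hl_br t) = hl_br (map_tuple hl_alpha t);
  hl_leibniz : forall (x : m.+1.-tuple hl_sort) (y : m.-tuple hl_sort),
     hl_br (cons_tuple (hl_br x) (map_tuple hl_alpha y))
     = \sum_(i < m.+1)
         hl_br (tsubst hl_alpha x i (hl_br (cons_tuple (tnth x i) y)))
}.

Section Defs.
Variables (F : fieldType) (m : nat).

Definition hl_hom (A B : hlalg F m) (f : A -> B) : Prop :=
  [/\ linmap f,
      forall t : m.+1.-tuple A, f (hl_br t) = hl_br (map_tuple f t)
    & forall x : A, f (hl_alpha x) = hl_alpha (f x)].

Definition hl_perfect (K : hlalg F m) : Prop :=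
  forall x : K, exists s : seq (F * m.+1.-tuple K),
    x = \sum_(p <- s) p.1 *: hl_br p.2.

Definition hl_center (K : hlalg F m) (x : K) : Prop :=
  forall (t : m.+1.-tuple K) (i : 'I_m.+1), hl_br (tsubst id t i x) = 0.

Definition hl_extension (K L : hlalg F m) (pi : K -> L) : Prop :=
  hl_hom pi /\ forall y : L, exists x : K, pi x = y.

Definition hl_central_extension (K L : hlalg F m) (pi : K -> L) : Prop :=
  hl_extension pi /\ forall x : K, pi x = 0 -> hl_center x.

Definition hl_splits (E K : hlalg F m) (rho : E -> K) : Prop :=
  exists sigma : K -> E, hl_hom sigma /\ forall x : K, rho (sigma x) = x.

Definition hl_universal_central (K L : hlalg F m) (pi : K -> L) : Prop :=
  hl_central_extension pi /\
  forall (K' : hlalg F m) (pi' : K' -> L), hl_central_extension pi' ->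
    exists h : K -> K', [/\ hl_hom h, (forall x, pi' (h x) = pi x)
      & forall h' : K -> K', hl_hom h' -> (forall x, pi' (h' x) = pi x) ->
          forall x, h' x = h x].
End Defs.

From HB Require Import structures.
From mathcomp Require Import all_boot all_order all_algebra.
Set Implicit Arguments. Unset Strict Implicit. Unset Printing Implicit Defensive.
Import GRing.Theory.
Local Open Scope ring_scope.

(* Given another central extension pi' : K' -> L, the fibre product
   K x_L K' is again a Hom-Leibniz n-algebra, and its first projection onto K
   is a central extension (its kernel is 0 x ker pi').  A splitting sigma of
   it yields h := snd o sigma with pi' o h = pi.  Two such lifts differ by
   central elements, so they agree on brackets, hence everywhere because K is
   perfect. *)

Section Linmap.
Variables (F : fieldType) (V W : lmodType F) (f : V -> W).
Hypothesis f_lin : linmap f.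

Lemma linmapD x y : f (x + y) = f x + f y.
Proof. by have := f_lin 1 x y; rewrite !scale1r. Qed.

Lemma linmap0 : f 0 = 0.
Proof. by apply: (@addrI _ (f 0)); rewrite -linmapD !addr0. Qed.

Lemma linmapZ a x : f (a *: x) = a *: f x.
Proof. by have := f_lin a x 0; rewrite !addr0 linmap0 addr0. Qed.

Lemma linmapB x y : f (x - y) = f x - f y.
Proof. by have := f_lin (-1) y x; rewrite !scaleN1r addrC [RHS]addrC. Qed.

Lemma linmap_sum I (r : seq I) (P : pred I) (G : I -> V) :
  f (\sum_(i <- r | P i) G i) = \sum_(i <- r | P i) f (G i).
Proof. exact: (big_morph f linmapD linmap0). Qed.
End Linmap.

Lemma tnth_tsubst T U n (f : T -> U) (t : n.-tuple T) i v j :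
  tnth (tsubst f t i v) j = if j == i then v else f (tnth t j).
Proof. by rewrite tnth_mktuple. Qed.

Lemma map_tsubst T U V n (g : U -> V) (f : T -> U) (t : n.-tuple T) i v :
  map_tuple g (tsubst f t i v) = tsubst (fun x => g (f x)) t i (g v).
Proof. by apply: eq_from_tnth => j; rewrite tnth_map !tnth_tsubst; case: ifP. Qed.

Lemma map_tsubst_id T U n (g : T -> U) (t : n.-tuple T) i v :
  map_tuple g (tsubst id t i v) = tsubst id (map_tuple g t) i (g v).
Proof.
by apply: eq_from_tnth => j; rewrite tnth_map !tnth_tsubst tnth_map; case: ifP.
Qed.

Section HomTheory.
Variables (F : fieldType) (m : nat).

Lemma hl_hom_comp (A B C : hlalg F m) (f : A -> B) (g : B -> C) :
  hl_hom f -> hl_hom g -> hl_hom (g \o f).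
Proof.
case=> f_lin f_br f_alpha [g_lin g_br g_alpha]; split=> /=.
- by move=> a x y /=; rewrite f_lin g_lin.
- by move=> t; rewrite f_br g_br; congr hl_br; apply: val_inj; rewrite /= map_comp.
- by move=> x; rewrite f_alpha g_alpha.
Qed.

Lemma hl_br_tsubst_center (A : hlalg F m) (t : m.+1.-tuple A) i (x y : A) :
  hl_center (x - y) -> hl_br (tsubst id t i x) = hl_br (tsubst id t i y).
Proof.
move=> cxy; apply/eqP; rewrite -subr_eq0 -(linmapB (hl_br_multilin t i)).
exact/eqP/cxy.
Qed.

Lemma hl_br_eq_mod_center (A : hlalg F m) (t1 t2 : m.+1.-tuple A) :
  (forall j, hl_center (tnth t1 j - tnth t2 j)) -> hl_br t1 = hl_br t2.
Proof.
move=> ct.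
pose hybrid k := [tuple if (j < k)%N then tnth t2 j else tnth t1 j | j < m.+1].
have hybrid_step k (lt_k : (k < m.+1)%N) :
    hl_br (hybrid k) = hl_br (hybrid k.+1).
  pose i := Ordinal lt_k.
  have -> : hybrid k = tsubst id (hybrid k) i (tnth t1 i).
    apply: eq_from_tnth => j; rewrite tnth_tsubst !tnth_mktuple.
    by case: (altP (j =P i)) => [-> | _] //=; rewrite ltnn.
  have -> : hybrid k.+1 = tsubst id (hybrid k) i (tnth t2 i).
    apply: eq_from_tnth => j; rewrite tnth_tsubst !tnth_mktuple ltnS leq_eqVlt.
    case: (altP (j =P i)) => [-> | ne_ji] /=; rewrite ?eqxx //.
    by have := ne_ji; rewrite -val_eqE /= => /negbTE ->.
  exact: hl_br_tsubst_center.
have hybrid_eq k : (k <= m.+1)%N -> hl_br t1 = hl_br (hybrid k).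
  elim: k => [_ | k IHk lt_k].
    by congr hl_br; apply: eq_from_tnth => j; rewrite tnth_mktuple.
  by rewrite IHk ?(ltnW lt_k) // hybrid_step.
rewrite (hybrid_eq m.+1 (leqnn _)); congr hl_br; apply: eq_from_tnth => j.
by rewrite tnth_mktuple ltn_ord.
Qed.

Lemma hl_hom_eq_of_perfect (A B : hlalg F m) (f g : A -> B) :
  hl_perfect A -> hl_hom f -> hl_hom g -> (forall x, hl_center (f x - g x)) ->
  f =1 g.
Proof.
move=> perfA [f_lin f_br _] [g_lin g_br _] cfg x.
have [s ->] := perfA x.
rewrite (linmap_sum f_lin) (linmap_sum g_lin); apply: eq_bigr => p _.
rewrite (linmapZ f_lin) (linmapZ g_lin) f_br g_br; congr (_ *: _).
by apply: hl_br_eq_mod_center => j; rewrite !tnth_map.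
Qed.
End HomTheory.

(* Each Hom-Leibniz axiom for operations (br, alpha) on E, once pushed along
   a map p intertwining them with those of A, follows from the axiom in A. *)
Section Transport.
Variables (F : fieldType) (m : nat) (E : lmodType F) (A : hlalg F m).
Variables (br : m.+1.-tuple E -> E) (alpha : E -> E) (p : E -> A).
Hypotheses (p_lin : linmap p)
  (p_br : forall t, p (br t) = hl_br (map_tuple p t))
  (p_alpha : forall x, p (alpha x) = hl_alpha (p x)).

Lemma transport_br_multilin t i a x y :
  p (br (tsubst id t i (a *: x + y)))
  = p (a *: br (tsubst id t i x) + br (tsubst id t i y)).
Proof. by rewrite p_lin !p_br !map_tsubst_id p_lin hl_br_multilin. Qed.

Lemma transport_alpha_lin a x y : p (alpha (a *: x + y)) = p (a *: alpha x + alpha y).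
Proof. by rewrite p_alpha !p_lin !p_alpha hl_alpha_lin. Qed.

Lemma transport_alpha_mult t : p (alpha (br t)) = p (br (map_tuple alpha t)).
Proof.
rewrite p_alpha !p_br hl_alpha_mult; congr hl_br.
by apply: eq_from_tnth => j; rewrite !tnth_map p_alpha.
Qed.

Lemma transport_leibniz x y :
  p (br (cons_tuple (br x) (map_tuple alpha y)))
  = p (\sum_(i < m.+1) br (tsubst alpha x i (br (cons_tuple (tnth x i) y)))).
Proof.
rewrite (linmap_sum p_lin) p_br.
have -> : map_tuple p (cons_tuple (br x) (map_tuple alpha y))
    = cons_tuple (hl_br (map_tuple p x)) (map_tuple (@hl_alpha F m A) (map_tuple p y)).
  apply: val_inj => /=; rewrite p_br -!map_comp; congr cons.
  by apply: eq_map => z /=; rewrite p_alpha.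
rewrite hl_leibniz; apply: eq_bigr => i _; rewrite p_br map_tsubst p_br.
congr hl_br; apply: eq_from_tnth => j; rewrite !tnth_tsubst tnth_map.
case: (j == i); last by rewrite tnth_map p_alpha.
by congr hl_br; apply: val_inj.
Qed.
End Transport.

Section Pullback.
Variables (F : fieldType) (m : nat) (K K' L : hlalg F m).
Variables (pi : K -> L) (pi' : K' -> L).
Hypotheses (pi_hom : hl_hom pi) (pi'_hom : hl_hom pi').

Definition pullback_pred : {pred K * K'} := fun x => pi x.1 == pi' x.2.

Lemma pullback_submod_closed : GRing.submod_closed pullback_pred.
Proof.
have [pi_lin _ _] := pi_hom; have [pi'_lin _ _] := pi'_hom.
split; first by rewrite unfold_in /= (linmap0 pi_lin) (linmap0 pi'_lin).
move=> a [u u'] [v v']; rewrite !unfold_in /= pi_lin pi'_lin.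
by move=> /eqP -> /eqP ->.
Qed.

HB.instance Definition _ := GRing.isSubmodClosed.Build F (K * K')%type
  pullback_pred (GRing.submod_closed_semi pullback_submod_closed).

Record pullback := Pullback { pb_val : K * K'; _ : pb_val \in pullback_pred }.
HB.instance Definition _ := [isSub for pb_val].
HB.instance Definition _ := [Choice of pullback by <:].
HB.instance Definition _ := [SubChoice_isSubLmodule of pullback by <:].

Definition pb_fst (e : pullback) : K := (pb_val e).1.
Definition pb_snd (e : pullback) : K' := (pb_val e).2.

Lemma pb_fst_lin : linmap pb_fst. Proof. by []. Qed.
Lemma pb_snd_lin : linmap pb_snd. Proof. by []. Qed.

Lemma pullbackP e : pi (pb_fst e) = pi' (pb_snd e).
Proof. by have := valP e; rewrite unfold_in => /eqP. Qed.

Lemma pullback_inj (u v : pullback) :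
  pb_fst u = pb_fst v -> pb_snd u = pb_snd v -> u = v.
Proof.
move=> eq1 eq2; apply: val_inj.
by rewrite [LHS]surjective_pairing [RHS]surjective_pairing; congr pair.
Qed.

Lemma pb_br_subproof (t : m.+1.-tuple pullback) :
  (hl_br (map_tuple pb_fst t), hl_br (map_tuple pb_snd t)) \in pullback_pred.
Proof.
have [_ pi_br _] := pi_hom; have [_ pi'_br _] := pi'_hom.
rewrite unfold_in /= pi_br pi'_br; apply/eqP; congr hl_br.
by apply: eq_from_tnth => j; rewrite !tnth_map pullbackP.
Qed.
Definition pb_br t := Pullback (pb_br_subproof t).

Lemma pb_alpha_subproof (e : pullback) :
  (hl_alpha (pb_fst e), hl_alpha (pb_snd e)) \in pullback_pred.
Proof.
have [_ _ pi_alpha] := pi_hom; have [_ _ pi'_alpha] := pi'_hom.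
by rewrite unfold_in /= pi_alpha pi'_alpha pullbackP.
Qed.
Definition pb_alpha e := Pullback (pb_alpha_subproof e).

Let fst_br t : pb_fst (pb_br t) = hl_br (map_tuple pb_fst t). Proof. by []. Qed.
Let snd_br t : pb_snd (pb_br t) = hl_br (map_tuple pb_snd t). Proof. by []. Qed.
Let fst_alpha e : pb_fst (pb_alpha e) = hl_alpha (pb_fst e). Proof. by []. Qed.
Let snd_alpha e : pb_snd (pb_alpha e) = hl_alpha (pb_snd e). Proof. by []. Qed.

Lemma pb_br_multilin t i : linmap (fun x => pb_br (tsubst id t i x)).
Proof.
move=> a x y; apply: pullback_inj.
- exact: (transport_br_multilin pb_fst_lin fst_br).
- exact: (transport_br_multilin pb_snd_lin snd_br).
Qed.

Lemma pb_alpha_lin : linmap pb_alpha.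
Proof.
move=> a x y; apply: pullback_inj.
- exact: (transport_alpha_lin pb_fst_lin fst_alpha).
- exact: (transport_alpha_lin pb_snd_lin snd_alpha).
Qed.

Lemma pb_alpha_mult t : pb_alpha (pb_br t) = pb_br (map_tuple pb_alpha t).
Proof.
apply: pullback_inj.
- exact: (transport_alpha_mult fst_br fst_alpha).
- exact: (transport_alpha_mult snd_br snd_alpha).
Qed.

Lemma pb_leibniz x y :
  pb_br (cons_tuple (pb_br x) (map_tuple pb_alpha y))
  = \sum_(i < m.+1) pb_br (tsubst pb_alpha x i (pb_br (cons_tuple (tnth x i) y))).
Proof.
apply: pullback_inj.
- exact: (transport_leibniz pb_fst_lin fst_br fst_alpha).
- exact: (transport_leibniz pb_snd_lin snd_br snd_alpha).
Qed.

Definition pullback_hlalg : hlalg F m :=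
  @HLAlg F m (GRing.Lmodule.clone F pullback _) pb_br pb_alpha
    pb_br_multilin pb_alpha_lin pb_alpha_mult pb_leibniz.

Lemma pb_snd_hom : @hl_hom F m pullback_hlalg K' pb_snd.
Proof. by split; [exact: pb_snd_lin | |]. Qed.

Lemma pb_fst_central_extension :
  (forall y, exists x, pi' x = y) -> (forall x, pi' x = 0 -> hl_center x) ->
  @hl_central_extension F m pullback_hlalg K pb_fst.
Proof.
move=> pi'_surj pi'_central; split; first split.
- by split; [exact: pb_fst_lin | |].
- move=> k; have [k' pi'k'] := pi'_surj (pi k).
  have kk' : (k, k') \in pullback_pred by rewrite unfold_in /= pi'k'.
  by exists (Pullback kk').
- move=> e e1_0 t i; apply: pullback_inj.
  + by rewrite fst_br map_tsubst_id e1_0 (linmap0 (hl_br_multilin _ i)).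
  + rewrite snd_br map_tsubst_id; apply: pi'_central.
    have [pi_lin _ _] := pi_hom.
    by rewrite -pullbackP e1_0 (linmap0 pi_lin).
Qed.
End Pullback.

Theorem theorem3p11 (F : fieldType) (m : nat) (hm : (1 <= m)%N)
  (K L : hlalg F m) (pi : K -> L) :
  hl_central_extension pi ->
  hl_perfect K ->
  (forall (E : hlalg F m) (rho : E -> K), hl_central_extension rho -> hl_splits rho) ->
  hl_universal_central pi.
Proof.
move=> pi_central K_perfect K_splits; split=> // K' pi' pi'_central.
have [[pi_hom _] _] := pi_central.
have [[pi'_hom pi'_surj] pi'_ker] := pi'_central.
have [sigma [sigma_hom sigmaK]] :=
  K_splits _ _ (pb_fst_central_extension pi_hom pi'_hom pi'_surj pi'_ker).
pose h x := pb_snd (sigma x).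
have h_hom : hl_hom h := hl_hom_comp sigma_hom (pb_snd_hom pi_hom pi'_hom).
have h_lift x : pi' (h x) = pi x by rewrite -pullbackP sigmaK.
exists h; split=> // h' h'_hom h'_lift; apply: hl_hom_eq_of_perfect => // x.
have [pi'_lin _ _] := pi'_hom.
by apply: pi'_ker; rewrite (linmapB pi'_lin) h'_lift h_lift subrr.
Qed.
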